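(* Let $i,j,n,r\ge0$ be integers and put $$R_1(\varepsilon)=\frac{(rn)!}{n!^r}\binom{rn+i+\varepsilon}{(r-1)n+j},$$ $$R_2(\varepsilon)=\frac{(rn)!}{n!^r}\frac{(1-\varepsilon)_{rn}}{(rn)!}\frac{(rn+j+1)!}{(1-\varepsilon)_{rn+j+1}}\binom{rn-\varepsilon+j-i}{j-i}\binom{(r+1)n-\varepsilon+1}{rn+i+1}.$$ Then for every integer $H\ge0$: if $0\le i,j\le n$, the number $d_n^H\frac1{H!}\frac{\partial^H}{\partial\varepsilon^H}R_1(\varepsilon)\big|_{\varepsilon=0}$ is an integer; and if $0\le i\le j\le n$, the number $d_n^H\frac1{H!}\frac{\partial^H}{\partial\varepsilon^H}R_2(\varepsilon)\big|_{\varepsilon=0}$ is an integer.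
   Context: $(x)_m=x(x+1)\cdots(x+m-1)$, $(x)_0=1$; for complex $x$ and integer $m$, $\binom xm=x(x-1)\cdots(x-m+1)/m!$ if $m\ge0$ and $\binom xm=0$ if $m<0$. $d_n=\operatorname{lcm}(1,\dots,n)$, $d_0=1$. *)

From Stdlib Require Import Reals ZArith Arith List.
From Coquelicot Require Import Coquelicot.
Open Scope R_scope.

Fixpoint falling (x : R) (m : nat) : R :=
  match m with O => 1 | S k => falling x k * (x - INR k) end.

Fixpoint poch (x : R) (m : nat) : R :=
  match m with O => 1 | S k => poch x k * (x + INR k) end.

Definition gbinom (x : R) (m : Z) : R :=
  match m with
  | Zneg _ => 0
  | _ => falling x (Z.to_nat m) / INR (fact (Z.to_nat m))
  end.

Definition dn (n : nat) : nat := fold_left Nat.lcm (seq 1 n) 1%nat.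

Definition RatR1 (i j n r : nat) (eps : R) : R :=
  INR (fact (r * n)) / INR (fact n) ^ r
  * gbinom (INR (r * n + i) + eps) ((Z.of_nat r - 1) * Z.of_nat n + Z.of_nat j)%Z.

Definition RatR2 (i j n r : nat) (eps : R) : R :=
  INR (fact (r * n)) / INR (fact n) ^ r
  * (poch (1 - eps) (r * n) / INR (fact (r * n)))
  * (INR (fact (r * n + j + 1)) / poch (1 - eps) (r * n + j + 1))
  * gbinom (INR (r * n) - eps + INR j - INR i) (Z.of_nat j - Z.of_nat i)%Z
  * gbinom (INR ((r + 1) * n) - eps + 1) (Z.of_nat (r * n + i + 1)).

(* Say that f is a d-multiple of w near 0 ([taylor_multiple d w f]) when f is analytic
   at 0 and its Taylor coefficients satisfy d^k a_k ∈ wℤ.  Weights multiply under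
   products; the factor c ± ε is a d-multiple of gcd(c, d), and 1/(b - ε) is a
   d-multiple of 1/b when b | d.  After cancellation, R_1 and R_2 are rational constants
   times products of falling factorials in ±ε, divided in R_2 (for r = 0) by one whose
   factors all divide d_n.  Hence d_n^H/H! R^(H)(0) lies in (constant · ∏_k gcd(c - k, d_n)) ℤ,
   and this number is an integer by Legendre's formula: for p^s ≤ n, the p-adic valuation
   of ∏_{k<m} gcd(c - k, d_n) counts the multiples of p^s among c - m + 1, ..., c. *)

From Stdlib Require Import Reals ZArith Arith List Lia Lra.
From Coquelicot Require Import Coquelicot.
From mathcomp Require ssreflect ssrbool eqtype ssrnat div prime bigop binomial zify.

Fixpoint gcd_falling (c m D : nat) : nat :=
  match m with
  | O => 1
  | S k => gcd_falling c k D * div.gcdn (c - k) D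
  end.

Lemma fold_lcm_divide l a :
  Nat.divide a (fold_left Nat.lcm l a) /\ forall x, In x l -> Nat.divide x (fold_left Nat.lcm l a).
Proof.
  revert a; induction l as [|y l IH]; intros a; simpl.
  - split; [apply Nat.divide_refl | intros x []].
  - destruct (IH (Nat.lcm a y)) as [Ha Hl]; split.
    + eapply Nat.divide_trans; [apply Nat.divide_lcm_l | exact Ha].
    + intros x [<- | Hx]; [| exact (Hl x Hx)].
      eapply Nat.divide_trans; [apply Nat.divide_lcm_r | exact Ha].
Qed.

Lemma dn_divide n k : (0 < k)%nat -> (k <= n)%nat -> Nat.divide k (dn n).
Proof. intros Hk Hkn; apply (fold_lcm_divide (seq 1 n) 1), in_seq; lia. Qed.

Lemma fold_lcm_neq0 l a :
  a <> 0%nat -> (forall x, In x l -> x <> 0%nat) -> fold_left Nat.lcm l a <> 0%nat.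
Proof.
  revert a; induction l as [|y l IH]; intros a Ha Hl; simpl; [exact Ha |].
  apply IH; [| intros x Hx; apply Hl; right; exact Hx].
  intros E; apply Nat.lcm_eq_0 in E; destruct E as [E | E]; [exact (Ha E) |].
  apply (Hl y); [left; reflexivity | exact E].
Qed.

Lemma dn_pos n : (0 < dn n)%nat.
Proof.
  apply Nat.neq_0_lt_0, fold_lcm_neq0; [lia |].
  intros x Hx; apply in_seq in Hx; lia.
Qed.

Module Legendre.
Import ssreflect ssrbool eqtype ssrnat div prime bigop binomial zify.
Local Open Scope nat_scope.

Lemma gcd_fallingS c m D : gcd_falling c m.+1 D = gcd_falling c m D * gcdn (c - m) D.
Proof. by []. Qed.

Lemma gcd_falling_gt0 c m D : 0 < D -> 0 < gcd_falling c m D.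
Proof.
move=> D_gt0; elim: m => // m IHm.
by rewrite gcd_fallingS muln_gt0 IHm gcdn_gt0 D_gt0 orbT.
Qed.

Lemma dvdn_divide d m : d %| m -> Nat.divide d m.
Proof. by case/dvdnP=> k ->; exists k. Qed.

Lemma factorial_fact k : k`! = fact k.
Proof. by elim: k => // k IHk; rewrite factS IHk. Qed.

Lemma expn_pow m k : m ^ k = Nat.pow m k.
Proof. by elim: k => // k IHk; rewrite expnS IHk. Qed.

Lemma dvdn_logn_le X Y : 0 < X -> 0 < Y ->
  (forall p, prime p -> logn p X <= logn p Y) -> X %| Y.
Proof.
move=> X_gt0 Y_gt0 leXY; apply/dvdn_partP => // p; rewrite mem_primes => /andP[p_pr _].
by rewrite p_part pfactor_dvdn // leXY.
Qed.

Lemma sum_leq_indicator L K : \sum_(1 <= s < K) (s <= L) <= L.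
Proof.
suff sumE K' : \sum_(1 <= s < K'.+1) (s <= L) = minn K' L.
  by case: K => [|K]; [rewrite big_geq | rewrite sumE geq_minr].
elim: K' => [|K' IHK]; first by rewrite big_geq // minnE.
by rewrite big_nat_recr //= IHK; case: (leqP K'.+1 L) => ?; lia.
Qed.

Lemma leq_mul_div r m d : r * (m %/ d) <= (r * m) %/ d.
Proof.
case: d => [|d]; first by rewrite !divn0 muln0.
by rewrite leq_divRL // -mulnA leq_mul2l leq_divM orbT.
Qed.

Lemma leq_add_div m k d : m %/ d + k %/ d <= (m + k) %/ d.
Proof. by case: d => [|d]; [rewrite !divn0 | rewrite divnD // leq_addr]. Qed.

Lemma dvdn_leq_div d k : 0 < k -> (d %| k) <= k %/ d.
Proof.
move=> k_gt0; case: (boolP (d %| k)) => // dvd_dk.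
by rewrite divn_gt0 ?(dvdn_gt0 k_gt0 dvd_dk) // dvdn_leq.
Qed.

Lemma logn_fact_sum p N K : prime p -> N < K -> logn p N`! = \sum_(1 <= s < K) N %/ p ^ s.
Proof.
move=> p_pr NK; rewrite logn_fact // [RHS](big_cat_nat _ (n := N.+1)) //=.
suff -> : \sum_(N.+1 <= s < K) N %/ p ^ s = 0 by rewrite addn0.
rewrite big_nat_cond big1 // => s /andP[/andP[Ns _] _].
by rewrite divn_small // (leq_trans Ns) // ltnW // ltn_expl // prime_gt1.
Qed.

Section GcdFalling.
Context {p n D : nat} (p_pr : prime p) (D_gt0 : 0 < D).
Hypothesis dvd_D : forall k, 0 < k -> k <= n -> k %| D.
Let e := trunc_log p n.

Lemma pexp_dvd_D s : s <= e -> p ^ s %| D.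
Proof.
case: s => [|s] se; first by rewrite dvd1n.
have n_gt0 : 0 < n by move: se; rewrite /e lt0n; case: eqP => // ->; rewrite trunc_log0.
apply: dvd_D; first by rewrite expn_gt0 prime_gt0.
apply: leq_trans (trunc_logP (prime_gt1 p_pr) n_gt0).
exact: leq_pexp2l (prime_gt0 p_pr) se.
Qed.

Lemma div_pexp_eq0 s : e < s -> n %/ p ^ s = 0.
Proof.
move=> es; apply: divn_small; apply: leq_trans (trunc_log_ltn n (prime_gt1 p_pr)) _.
exact: leq_pexp2l (prime_gt0 p_pr) es.
Qed.

Lemma logn_gcdn_ge k K : 0 < k ->
  \sum_(1 <= s < K) ((s <= e) * (p ^ s %| k)) <= logn p (gcdn k D).
Proof.
move=> k_gt0; apply: leq_trans (sum_leq_indicator (logn p (gcdn k D)) K).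
apply: leq_sum => s _.
case: (boolP (s <= e)) => se; case: (boolP (p ^ s %| k)) => dvd_k //=.
by rewrite -pfactor_dvdn ?gcdn_gt0 ?k_gt0 // dvdn_gcd dvd_k pexp_dvd_D.
Qed.

Lemma logn_gcd_falling_ge c m K : m <= c ->
  \sum_(1 <= s < K) ((s <= e) * (c %/ p ^ s - (c - m) %/ p ^ s))
    <= logn p (gcd_falling c m D).
Proof.
elim: m => [|m IHm] mc.
  by rewrite big1 // => s _; rewrite subn0 subnn muln0.
have cm_gt0 : 0 < c - m by lia.
rewrite gcd_fallingS lognM ?gcd_falling_gt0 ?gcdn_gt0 ?D_gt0 ?orbT //.
apply: leq_trans (leq_add (IHm (ltnW mc)) (logn_gcdn_ge (c - m) K cm_gt0)).
rewrite -big_split /=; apply: leq_sum => s _.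
rewrite -mulnDr leq_mul2l; apply/orP; right.
have := @dvdn_leq_div (p ^ s) _ cm_gt0.
have : (c - m) %/ p ^ s <= c %/ p ^ s by apply: leq_div2r; lia.
by rewrite (_ : c - m.+1 = (c - m).-1) ?divn_pred; lia.
Qed.

End GcdFalling.

Section FactorialQuotients.
Context {n D : nat} (D_gt0 : 0 < D).
Hypothesis dvd_D : forall k, 0 < k -> k <= n -> k %| D.

Lemma dvdn_fact_gcd_falling L c : L <= n -> L <= c -> L`! %| gcd_falling c L D.
Proof.
move=> Ln Lc; apply: dvdn_logn_le; rewrite ?fact_gt0 ?gcd_falling_gt0 // => p p_pr.
rewrite (@logn_fact_sum p L (n + c).+1) //; last by lia.
apply: leq_trans (logn_gcd_falling_ge p_pr D_gt0 dvd_D c L (n + c).+1 Lc).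
apply: leq_sum => s _; have Ln_s : L %/ p ^ s <= n %/ p ^ s by apply: leq_div2r.
case: (leqP s (trunc_log p n)) => se /=.
- rewrite mul1n leq_subRL; last by apply: leq_div2r; lia.
  by have := leq_add_div (c - L) L (p ^ s); rewrite subnK.
- by move: Ln_s; rewrite (div_pexp_eq0 p_pr s se) mul0n.
Qed.

Lemma dvdn_RatR1_weight r m c : m <= r * n -> m <= c ->
  n`! ^ r * m`! %| (r * n)`! * gcd_falling c m D.
Proof.
move=> m_rn m_c; apply: dvdn_logn_le.
- by rewrite muln_gt0 expn_gt0 !fact_gt0.
- by rewrite muln_gt0 fact_gt0 gcd_falling_gt0.
move=> p p_pr; set K := (r * n + n + c).+1.
rewrite lognM ?expn_gt0 ?fact_gt0 // lognX lognM ?fact_gt0 ?gcd_falling_gt0 //.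
rewrite !(@logn_fact_sum p _ K) //; try lia.
apply: leq_trans (leq_add (leqnn _) (logn_gcd_falling_ge p_pr D_gt0 dvd_D c m K m_c)).
rewrite big_distrr -!big_split /=; apply: leq_sum => s _.
case: (leqP s (trunc_log p n)) => se /=.
- rewrite mul1n; apply: leq_add; first exact: leq_mul_div.
  rewrite leq_subRL; last by apply: leq_div2r; lia.
  by have := leq_add_div (c - m) m (p ^ s); rewrite subnK.
- by rewrite (div_pexp_eq0 p_pr s se) muln0 mul0n addn0; apply: leq_div2r.
Qed.

Lemma dvdn_RatR2_weight r i j : i <= j -> j <= n -> n <= r * n + j ->
  n`! ^ r * (j - i)`! * (r * n + i + 1)`! %|
  (r * n + j + 1)`! * gcd_falling ((r + 1) * n + 1) (n - j) D
                    * gcd_falling (r * n + j - i) (r * n + j - n) D.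
Proof.
move=> ij jn n_rnj; apply: dvdn_logn_le.
- by rewrite !muln_gt0 expn_gt0 !fact_gt0.
- by rewrite !muln_gt0 fact_gt0 !gcd_falling_gt0.
move=> p p_pr; set K := (r + 1) * n + n + j + 2.
rewrite !lognM ?muln_gt0 ?expn_gt0 ?fact_gt0 ?gcd_falling_gt0 // lognX.
rewrite !(@logn_fact_sum p _ K) //; try lia.
have m1 : n - j <= (r + 1) * n + 1 by lia.
have m2 : r * n + j - n <= r * n + j - i by lia.
apply: leq_trans (leq_add (leq_add (leqnn _) (logn_gcd_falling_ge p_pr D_gt0 dvd_D _ _ K m1))
                          (logn_gcd_falling_ge p_pr D_gt0 dvd_D _ _ K m2)).
rewrite big_distrr -!big_split /=; apply: leq_sum => s _.
rewrite (_ : (r + 1) * n + 1 - (n - j) = r * n + j + 1); last by lia.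
rewrite (_ : r * n + j - i - (r * n + j - n) = n - i); last by lia.
have le_rnj : r * n + j + 1 <= (r + 1) * n + 1 by lia.
have le_ni : n - i <= r * n + j - i by lia.
have e2 : r * n + (j - i) = r * n + j - i by lia.
have e3 : r * n + i + 1 + (n - i) = (r + 1) * n + 1 by lia.
have e4 : j - i + (r * n + i + 1) = r * n + j + 1 by lia.
set q := p ^ s.
have le_rq := leq_mul_div r n q.
have sub_rnji := leq_add_div (r * n) (j - i) q; rewrite e2 in sub_rnji.
have sub_top := leq_add_div (r * n + i + 1) (n - i) q; rewrite e3 in sub_top.
have sub_rnj1 := leq_add_div (j - i) (r * n + i + 1) q; rewrite e4 in sub_rnj1.
have mono_top := leq_div2r q le_rnj.
have mono_ni := leq_div2r q le_ni.
case: (leqP s (trunc_log p n)) => se /=.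
- (* abstract the quotients: lia cannot cope with them but the rest is linear *)
  move: le_rq sub_rnji sub_top mono_top mono_ni => {sub_rnj1}.
  move: (n %/ q) ((r * n) %/ q) ((j - i) %/ q) ((r * n + i + 1) %/ q) ((n - i) %/ q).
  move: ((r * n + j - i) %/ q) ((r * n + j + 1) %/ q) (((r + 1) * n + 1) %/ q).
  lia.
- by rewrite (div_pexp_eq0 p_pr s se) muln0 !mul0n !addn0 add0n.
Qed.

End FactorialQuotients.

Lemma dn_gt0 n : 0 < dn n.
Proof. exact/ltP/dn_pos. Qed.

Lemma dvdn_dn n k : 0 < k -> k <= n -> k %| dn n.
Proof.
by move=> /ltP k_gt0 /leP kn; case: (dn_divide _ _ k_gt0 kn) => z ->; apply: dvdn_mull.
Qed.

End Legendre.

Lemma divide_RatR1_weight n r m c : (m <= r * n)%nat -> (m <= c)%nat ->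
  Nat.divide (fact n ^ r * fact m) (fact (r * n) * gcd_falling c m (dn n)).
Proof.
  intros Hm Hc; apply Legendre.dvdn_divide.
  rewrite <- Legendre.expn_pow, <- !Legendre.factorial_fact.
  apply (Legendre.dvdn_RatR1_weight (Legendre.dn_gt0 n) (@Legendre.dvdn_dn n));
    apply (ssrbool.introT ssrnat.leP); assumption.
Qed.

Lemma divide_RatR2_weight n r i j : (i <= j)%nat -> (j <= n)%nat -> (n <= r * n + j)%nat ->
  Nat.divide (fact n ^ r * fact (j - i) * fact (r * n + i + 1))
    (fact (r * n + j + 1) * gcd_falling ((r + 1) * n + 1) (n - j) (dn n)
                          * gcd_falling (r * n + j - i) (r * n + j - n) (dn n)).
Proof.
  intros Hij Hjn Hn; apply Legendre.dvdn_divide.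
  rewrite <- Legendre.expn_pow, <- !Legendre.factorial_fact.
  apply (Legendre.dvdn_RatR2_weight (Legendre.dn_gt0 n) (@Legendre.dvdn_dn n));
    apply (ssrbool.introT ssrnat.leP); assumption.
Qed.

Lemma divide_fact_gcd_falling n L c : (L <= n)%nat -> (L <= c)%nat ->
  Nat.divide (fact L) (gcd_falling c L (dn n)).
Proof.
  intros HL HLc; apply Legendre.dvdn_divide; rewrite <- Legendre.factorial_fact.
  apply (Legendre.dvdn_fact_gcd_falling (Legendre.dn_gt0 n) (@Legendre.dvdn_dn n));
    apply (ssrbool.introT ssrnat.leP); assumption.
Qed.

Open Scope R_scope.

Lemma locally_Rabs_lt r : 0 < r -> locally 0 (fun x => Rabs x < r).
Proof.
  intros Hr; exists (mkposreal r Hr); intros x Hx.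
  change (Rabs (x + - 0) < r) in Hx; rewrite Ropp_0, Rplus_0_r in Hx; exact Hx.
Qed.

Lemma CV_radius_abs (a : nat -> R) : CV_radius (fun k => Rabs (a k)) = CV_radius a.
Proof.
  apply Lub_Rbar_eqset; intros r; unfold CV_disk.
  split; apply ex_series_ext; intros k; rewrite !Rabs_mult, Rabs_Rabsolu; reflexivity.
Qed.

Lemma CV_disk_le_radius (a : nat -> R) r : CV_disk a r -> Rbar_le r (CV_radius a).
Proof. apply (proj1 (Lub_Rbar_correct (CV_disk a))). Qed.

Lemma locally_lt_CV_radius (a : nat -> R) :
  Rbar_lt 0 (CV_radius a) -> locally 0 (fun x => Rbar_lt (Rabs x) (CV_radius a)).
Proof.
  destruct (CV_radius a) as [r | |]; simpl; intros Hr.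
  - exact (locally_Rabs_lt r Hr).
  - apply filter_forall; easy.
  - contradiction.
Qed.

Lemma CV_radius_mult_gt0 (a b : nat -> R) :
  Rbar_lt 0 (CV_radius a) -> Rbar_lt 0 (CV_radius b) -> Rbar_lt 0 (CV_radius (PS_mult a b)).
Proof.
  rewrite <- (CV_radius_abs a), <- (CV_radius_abs b); intros Ha Hb.
  destruct (filter_and _ _ (locally_lt_CV_radius _ Ha) (locally_lt_CV_radius _ Hb))
    as [eps Heps].
  set (rho := eps / 2).
  assert (Hrho : 0 < rho) by (unfold rho; destruct eps; simpl; lra).
  destruct (Heps rho) as [Ha' Hb'].
  { change (Rabs (rho + - 0) < eps); rewrite Ropp_0, Rplus_0_r, Rabs_pos_eq by lra.
    unfold rho; destruct eps; simpl; lra. }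
  apply Rbar_lt_le_trans with (Finite rho); [exact Hrho |].
  apply CV_disk_le_radius; unfold CV_disk.
  apply (@ex_series_le R_AbsRing R_CompleteNormedModule)
    with (fun k => PS_mult (fun k => Rabs (a k)) (fun k => Rabs (b k)) k * rho ^ k).
  - intros k; change norm with Rabs; simpl.
    rewrite Rabs_Rabsolu, Rabs_mult, (Rabs_pos_eq (rho ^ k)) by (apply pow_le; lra).
    apply Rmult_le_compat_r; [apply pow_le; lra |].
    unfold PS_mult; eapply Rle_trans; [apply sum_f_R0_triangle |].
    right; apply sum_eq; intros t _; apply Rabs_mult.
  - apply ex_series_ext with (2 := ex_pseries_mult _ _ _ Ha' Hb').
    intros k; rewrite pow_n_pow; apply Rmult_comm.
Qed.

Definition local_pseries (f : R -> R) (a : nat -> R) : Prop :=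
  Rbar_lt 0 (CV_radius a) /\ locally 0 (fun x => f x = PSeries a x).

Lemma local_pseries_ext f g a :
  local_pseries f a -> locally 0 (fun x => f x = g x) -> local_pseries g a.
Proof.
  intros [Ha Hf] Hfg; split; [exact Ha |].
  generalize (filter_and _ _ Hf Hfg); apply filter_imp.
  intros x [Ef Eg]; rewrite <- Eg; exact Ef.
Qed.

Lemma local_pseries_mult f g a b :
  local_pseries f a -> local_pseries g b -> local_pseries (fun x => f x * g x) (PS_mult a b).
Proof.
  intros [Ha Hf] [Hb Hg]; split; [exact (CV_radius_mult_gt0 a b Ha Hb) |].
  generalize (filter_and _ _ (filter_and _ _ Hf Hg)
                (filter_and _ _ (locally_lt_CV_radius a Ha) (locally_lt_CV_radius b Hb))).
  apply filter_imp; intros x [[Ef Eg] [Lx Mx]].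
  rewrite Ef, Eg, PSeries_mult by assumption.
  reflexivity.
Qed.

Definition lin_coef (c s : R) (k : nat) : R :=
  match k with O => c | 1%nat => s | _ => 0 end.

Lemma is_pseries_lin_coef c s x : is_pseries (lin_coef c s) x (c + s * x).
Proof.
  apply is_pseries_R; unfold is_series.
  apply filterlim_ext_loc with (fun _ => c + s * x); [| apply filterlim_const].
  exists 1%nat; intros m Hm; induction Hm as [| m Hm IH].
  - rewrite sum_Sn, sum_O; simpl; change plus with Rplus; ring.
  - rewrite sum_Sn, <- IH; destruct m as [| m]; [lia |]; simpl.
    change plus with Rplus; ring.
Qed.

Lemma local_pseries_lin c s : local_pseries (fun x => c + s * x) (lin_coef c s).
Proof.
  split.
  - apply Rbar_lt_le_trans with (Finite 1); [simpl; lra |].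
    apply CV_disk_le_radius; unfold CV_disk.
    apply ex_series_ext with (fun k => lin_coef (Rabs c) (Rabs s) k * 1 ^ k).
    2: { eexists; apply (proj1 (is_pseries_R _ _ _)), is_pseries_lin_coef. }
    intros [| [| k]]; simpl; rewrite ?Rmult_1_r, ?Rabs_Rabsolu; try reflexivity.
    rewrite !Rmult_0_l; symmetry; apply Rabs_R0.
  - apply filter_forall; intros x; symmetry; apply is_pseries_unique, is_pseries_lin_coef.
Qed.

Lemma is_pseries_inv_lin b x :
  0 < b -> Rabs x < b -> is_pseries (fun k => / b ^ S k) x (/ (b - x)).
Proof.
  intros Hb Hx; apply is_pseries_R.
  assert (Hq : Rabs (x / b) < 1).
  { unfold Rdiv; rewrite Rabs_mult, (Rabs_pos_eq (/ b)) by (apply Rlt_le, Rinv_0_lt_compat, Hb).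
    apply (Rmult_lt_reg_r b); [exact Hb |].
    rewrite Rmult_assoc, Rinv_l, Rmult_1_r, Rmult_1_l; lra. }
  apply Rabs_def2 in Hx.
  replace (/ (b - x)) with (/ b * / (1 - x / b)) by (field; split; lra).
  apply is_series_ext with (2 := is_series_scal_l (/ b) _ _ (is_series_geom _ Hq)).
  intros k; change (scal (/ b) ((x / b) ^ k)) with (/ b * (x / b) ^ k); simpl.
  unfold Rdiv; rewrite Rpow_mult_distr, pow_inv, Rinv_mult; ring.
Qed.

Lemma local_pseries_inv_lin b : 0 < b -> local_pseries (fun x => / (b - x)) (fun k => / b ^ S k).
Proof.
  intros Hb; split.
  - apply Rbar_lt_le_trans with (Finite (b / 2)); [simpl; lra |].
    apply CV_disk_le_radius; unfold CV_disk.
    apply ex_series_ext with (fun k => / b ^ S k * (b / 2) ^ k).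
    2: { eexists; apply (proj1 (is_pseries_R _ _ _)), is_pseries_inv_lin; [exact Hb |].
         rewrite Rabs_pos_eq; lra. }
    intros k; symmetry; apply Rabs_pos_eq, Rmult_le_pos.
    + apply Rlt_le, Rinv_0_lt_compat, pow_lt, Hb.
    + apply pow_le; lra.
  - generalize (locally_Rabs_lt b Hb); apply filter_imp; intros x Hx.
    symmetry; apply is_pseries_unique, is_pseries_inv_lin; assumption.
Qed.

Definition taylor_multiple (d w : R) (f : R -> R) : Prop :=
  exists a, local_pseries f a /\ forall k, exists z : Z, d ^ k * a k = w * IZR z.

Lemma taylor_multiple_ext d w f g :
  taylor_multiple d w f -> locally 0 (fun x => f x = g x) -> taylor_multiple d w g.
Proof.
  intros [a [Hf Ha]] Hfg; exists a; split; [exact (local_pseries_ext f g a Hf Hfg) | exact Ha].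
Qed.

Lemma sum_f_R0_multiple (F : nat -> R) c N :
  (forall k, (k <= N)%nat -> exists z : Z, F k = c * IZR z) ->
  exists z : Z, sum_f_R0 F N = c * IZR z.
Proof.
  induction N as [| N IH]; intros HF.
  - destruct (HF 0%nat (le_n 0)) as [z Hz]; exists z; exact Hz.
  - destruct IH as [z1 Hz1]; [intros k Hk; apply HF; lia |].
    destruct (HF (S N) (le_n _)) as [z2 Hz2].
    exists (z1 + z2)%Z; simpl; rewrite Hz1, Hz2, plus_IZR; ring.
Qed.

Lemma taylor_multiple_mult d v w f g :
  taylor_multiple d v f -> taylor_multiple d w g -> taylor_multiple d (v * w) (fun x => f x * g x).
Proof.
  intros [a [Hf Ha]] [b [Hg Hb]]; exists (PS_mult a b); split.
  - exact (local_pseries_mult f g a b Hf Hg).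
  - intros k; unfold PS_mult; rewrite scal_sum.
    apply sum_f_R0_multiple; intros t Ht.
    destruct (Ha t) as [z1 E1], (Hb (k - t)%nat) as [z2 E2]; exists (z1 * z2)%Z.
    replace (d ^ k) with (d ^ t * d ^ (k - t)) by (rewrite <- pow_add; f_equal; lia).
    rewrite mult_IZR; transitivity ((d ^ t * a t) * (d ^ (k - t) * b (k - t)%nat)); [ring |].
    rewrite E1, E2; ring.
Qed.

Lemma taylor_multiple_const d c : taylor_multiple d c (fun _ => c).
Proof.
  exists (lin_coef c 0); split.
  - apply local_pseries_ext with (fun x => c + 0 * x); [apply local_pseries_lin |].
    apply filter_forall; intros x; ring.
  - intros [| [| k]]; [exists 1%Z | exists 0%Z | exists 0%Z]; simpl; ring.
Qed.

Lemma taylor_multiple_scal d c w f :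
  taylor_multiple d w f -> taylor_multiple d (c * w) (fun x => c * f x).
Proof. apply taylor_multiple_mult, taylor_multiple_const. Qed.

Lemma taylor_multiple_lin (D k : nat) (s : Z) :
  taylor_multiple (INR D) (INR (div.gcdn k D)) (fun x => INR k + IZR s * x).
Proof.
  exists (lin_coef (INR k) (IZR s)); split; [apply local_pseries_lin |].
  destruct (Legendre.dvdn_divide _ _ (div.dvdn_gcdl k D)) as [u Hu].
  destruct (Legendre.dvdn_divide _ _ (div.dvdn_gcdr k D)) as [v Hv].
  intros [| [| t]]; simpl.
  - exists (Z.of_nat u); rewrite <- INR_IZR_INZ; rewrite Hu at 1; rewrite mult_INR; ring.
  - exists (s * Z.of_nat v)%Z; rewrite mult_IZR, <- INR_IZR_INZ; rewrite Hv at 1.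
    rewrite mult_INR; ring.
  - exists 0%Z; ring.
Qed.

Lemma taylor_multiple_inv_lin (D b : nat) : (0 < b)%nat -> Nat.divide b D ->
  taylor_multiple (INR D) (/ INR b) (fun x => / (INR b - x)).
Proof.
  intros Hb [w Hw]; assert (Hb' : 0 < INR b) by (apply lt_0_INR; exact Hb).
  exists (fun k => / INR b ^ S k); split; [exact (local_pseries_inv_lin (INR b) Hb') |].
  intros k; exists (Z.of_nat (w ^ k)); rewrite <- INR_IZR_INZ, pow_INR, Hw, mult_INR.
  simpl; rewrite Rpow_mult_distr; field; split; [lra | apply pow_nonzero; lra].
Qed.

Lemma taylor_multiple_falling (D c m : nat) (s : Z) : (m <= c)%nat ->
  taylor_multiple (INR D) (INR (gcd_falling c m D)) (fun x => falling (INR c + IZR s * x) m).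
Proof.
  induction m as [| m IH]; intros Hm; [simpl; apply taylor_multiple_const |].
  simpl gcd_falling; rewrite mult_INR.
  apply taylor_multiple_ext
    with (fun x => falling (INR c + IZR s * x) m * (INR (c - m) + IZR s * x)).
  - apply taylor_multiple_mult; [apply IH; lia | apply taylor_multiple_lin].
  - apply filter_forall; intros x; simpl; rewrite minus_INR by lia.
    ring.
Qed.

Lemma taylor_multiple_inv_falling (D c m : nat) : (m <= c)%nat ->
  (forall k, (0 < k)%nat -> (k <= c)%nat -> Nat.divide k D) ->
  taylor_multiple (INR D) (/ falling (INR c) m) (fun x => / falling (INR c - x) m).
Proof.
  intros Hm HD; induction m as [| m IH]; simpl.
  - rewrite Rinv_1; apply taylor_multiple_ext with (fun _ => 1); [apply taylor_multiple_const |].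
    apply filter_forall; intros x; simpl; field.
  - rewrite Rinv_mult, <- minus_INR by lia.
    apply taylor_multiple_ext with (fun x => / falling (INR c - x) m * / (INR (c - m) - x)).
    + apply taylor_multiple_mult; [apply IH; lia | apply taylor_multiple_inv_lin, HD; lia].
    + apply filter_forall; intros x; rewrite minus_INR, Rinv_mult by lia.
      f_equal; f_equal; ring.
Qed.

Lemma taylor_multiple_Derive_n (D : nat) (w : Z) f : taylor_multiple (INR D) (IZR w) f ->
  forall H, exists z : Z, INR D ^ H * / INR (fact H) * Derive_n f H 0 = IZR z.
Proof.
  intros [a [[Ha Hf] Hw]] H; destruct (Hw H) as [z Hz]; exists (w * z)%Z.
  rewrite (Derive_n_ext_loc f (PSeries a) H 0 Hf), Derive_n_coef by exact Ha.
  rewrite mult_IZR, <- Hz; field; apply INR_fact_neq_0.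
Qed.

Lemma falling_add y a b : falling y (a + b) = falling y a * falling (y - INR a) b.
Proof.
  induction b as [| b IH]; [rewrite Nat.add_0_r; simpl; ring |].
  rewrite Nat.add_succ_r; simpl; rewrite IH, plus_INR; ring.
Qed.

Lemma poch_falling y m : poch y m = falling (y + INR m - 1) m.
Proof.
  induction m as [| m IH]; [reflexivity |].
  simpl poch; rewrite IH; replace (S m) with (1 + m)%nat by reflexivity.
  rewrite falling_add, plus_INR; simpl.
  replace (y + (1 + INR m) - 1 - 1) with (y + INR m - 1) by ring.
  ring.
Qed.

Lemma poch_pos y m : 0 < y -> 0 < poch y m.
Proof.
  intros Hy; induction m as [| m IH]; simpl; [lra |].
  apply Rmult_lt_0_compat; [exact IH | pose proof (pos_INR m); lra].
Qed.

Lemma falling_pos y m : INR m - 1 < y -> 0 < falling y m.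
Proof.
  induction m as [| m IH]; intros Hy; simpl; [lra |].
  rewrite S_INR in Hy; apply Rmult_lt_0_compat; [apply IH |]; lra.
Qed.

Lemma falling_fact c m : (m <= c)%nat -> falling (INR c) m * INR (fact (c - m)) = INR (fact c).
Proof.
  induction m as [| m IH]; intros Hm; [rewrite Nat.sub_0_r; simpl; ring |].
  rewrite <- IH by lia.
  replace (c - m)%nat with (S (c - S m)) by lia.
  simpl falling; rewrite fact_simpl, mult_INR, S_INR, minus_INR, S_INR by lia.
  ring.
Qed.

Lemma gbinom_nat y k : gbinom y (Z.of_nat k) = falling y k / INR (fact k).
Proof. destruct k as [| k]; [reflexivity |]; unfold gbinom; rewrite Nat2Z.id; reflexivity. Qed.

Lemma gbinom_neg y z : (z < 0)%Z -> gbinom y z = 0.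
Proof. destruct z; [lia | lia | reflexivity]. Qed.

Lemma falling_sub_add c a b x : (a <= c)%nat ->
  falling (INR c - x) (a + b) = falling (INR c - x) a * falling (INR (c - a) - x) b.
Proof.
  intros Hac; rewrite falling_add, minus_INR by exact Hac.
  f_equal; f_equal; ring.
Qed.

Lemma falling_sub_pos c m x : (m <= c)%nat -> x < 1 -> 0 < falling (INR c - x) m.
Proof. intros Hm Hx; apply falling_pos; apply le_INR in Hm; lra. Qed.

Lemma poch_1_sub c x : poch (1 - x) c = falling (INR c - x) c.
Proof. rewrite poch_falling; f_equal; ring. Qed.

Lemma RatR1_falling i j n r x : (n <= r * n + j)%nat ->
  RatR1 i j n r x = INR (fact (r * n)) / (INR (fact n) ^ r * INR (fact (r * n + j - n)))
                    * falling (INR (r * n + i) + x) (r * n + j - n).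
Proof.
  intros Hn; unfold RatR1.
  replace ((Z.of_nat r - 1) * Z.of_nat n + Z.of_nat j)%Z with (Z.of_nat (r * n + j - n)) by lia.
  rewrite gbinom_nat; field.
  split; [apply INR_fact_neq_0 | apply pow_nonzero, INR_fact_neq_0].
Qed.

Lemma RatR1_eq0 i j n r x : (r * n + j < n)%nat -> RatR1 i j n r x = 0.
Proof. intros Hn; unfold RatR1; rewrite gbinom_neg by lia; ring. Qed.

Lemma poch_1_sub_split a i j x : (i <= j)%nat ->
  poch (1 - x) (a + j + 1) =
  falling (INR (a + j + 1) - x) (i + 1) * falling (INR (a + j - i) - x) (j - i) * poch (1 - x) a.
Proof.
  intros Hij; rewrite !poch_1_sub.
  replace (a + j + 1)%nat with ((i + 1) + ((j - i) + a))%nat at 2 by lia.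
  rewrite (falling_sub_add _ (i + 1)), (falling_sub_add _ (j - i)) by lia.
  replace (a + j + 1 - (i + 1))%nat with (a + j - i)%nat by lia.
  replace (a + j - i - (j - i))%nat with a by lia.
  ring.
Qed.

Lemma falling_RatR2_split n r i j x : (i <= j)%nat -> (j <= n)%nat -> (n <= r * n + j)%nat ->
  falling (INR ((r + 1) * n + 1) - x) (r * n + i + 1)
  = falling (INR ((r + 1) * n + 1) - x) (n - j)
    * (falling (INR (r * n + j + 1) - x) (i + 1)
       * falling (INR (r * n + j - i) - x) (r * n + j - n)).
Proof.
  intros Hij Hjn Hn.
  replace (r * n + i + 1)%nat with ((n - j) + ((i + 1) + (r * n + j - n)))%nat by lia.
  rewrite (falling_sub_add _ (n - j)), (falling_sub_add _ (i + 1)) by lia.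
  replace ((r + 1) * n + 1 - (n - j))%nat with (r * n + j + 1)%nat by lia.
  replace (r * n + j + 1 - (i + 1))%nat with (r * n + j - i)%nat by lia.
  reflexivity.
Qed.

Lemma RatR2_falling_ratio i j n r x : (i <= j)%nat -> x < 1 ->
  RatR2 i j n r x =
  INR (fact (r * n + j + 1))
  / (INR (fact n) ^ r * INR (fact (j - i)) * INR (fact (r * n + i + 1)))
  * (falling (INR ((r + 1) * n + 1) - x) (r * n + i + 1)
     / falling (INR (r * n + j + 1) - x) (i + 1)).
Proof.
  intros Hij Hx; unfold RatR2.
  rewrite <- Nat2Z.inj_sub, !gbinom_nat, (poch_1_sub_split (r * n) i j x Hij) by exact Hij.
  replace (INR (r * n) - x + INR j - INR i) with (INR (r * n + j - i) - x)
    by (rewrite minus_INR, !plus_INR by lia; ring).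
  replace (INR ((r + 1) * n) - x + 1) with (INR ((r + 1) * n + 1) - x)
    by (rewrite plus_INR; simpl; ring).
  assert (P0 : 0 < poch (1 - x) (r * n)) by (apply poch_pos; lra).
  assert (P1 := falling_sub_pos (r * n + j + 1) (i + 1) x ltac:(lia) Hx).
  assert (P2 := falling_sub_pos (r * n + j - i) (j - i) x ltac:(lia) Hx).
  field; repeat split; try apply INR_fact_neq_0; try apply pow_nonzero, INR_fact_neq_0; lra.
Qed.

Lemma INR_ratio_integral (a b : nat) : (b <> 0)%nat -> Nat.divide b a ->
  exists z : Z, INR a / INR b = IZR z.
Proof.
  intros Hb [z ->]; exists (Z.of_nat z).
  rewrite mult_INR, <- INR_IZR_INZ; field; apply not_0_INR, Hb.
Qed.

Lemma fact_pow_neq0 n r : (fact n ^ r <> 0)%nat.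
Proof. apply Nat.pow_nonzero, fact_neq_0. Qed.

Lemma taylor_multiple_RatR1 i j n r : (j <= n)%nat ->
  exists w : Z, taylor_multiple (INR (dn n)) (IZR w) (RatR1 i j n r).
Proof.
  intros Hj; destruct (le_lt_dec n (r * n + j)) as [Hn | Hn].
  - set (m := (r * n + j - n)%nat).
    destruct (INR_ratio_integral _ _
                (proj1 (Nat.neq_mul_0 _ _) (conj (fact_pow_neq0 n r) (fact_neq_0 m)))
                (divide_RatR1_weight n r m (r * n + i) ltac:(lia) ltac:(lia))) as [w Hw].
    exists w; rewrite <- Hw, !mult_INR, pow_INR.
    set (c := INR (fact (r * n)) / (INR (fact n) ^ r * INR (fact m))).
    replace (INR (fact (r * n)) * INR (gcd_falling (r * n + i) m (dn n))
             / (INR (fact n) ^ r * INR (fact m)))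
      with (c * INR (gcd_falling (r * n + i) m (dn n)))
      by (unfold c; field; split; [apply INR_fact_neq_0 | apply pow_nonzero, INR_fact_neq_0]).
    apply taylor_multiple_ext with (fun x => c * falling (INR (r * n + i) + IZR 1 * x) m).
    + apply taylor_multiple_scal, taylor_multiple_falling; lia.
    + apply filter_forall; intros x; rewrite RatR1_falling by exact Hn.
      rewrite Rmult_1_l; reflexivity.
  - exists 0%Z; apply taylor_multiple_ext with (fun _ => IZR 0); [apply taylor_multiple_const |].
    apply filter_forall; intros x; rewrite RatR1_eq0 by exact Hn; reflexivity.
Qed.

Lemma taylor_multiple_RatR2_large i j n r :
  (i <= j)%nat -> (j <= n)%nat -> (n <= r * n + j)%nat ->
  exists w : Z, taylor_multiple (INR (dn n)) (IZR w) (RatR2 i j n r).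
Proof.
  intros Hij Hjn Hn.
  assert (Hb : (fact n ^ r * fact (j - i) * fact (r * n + i + 1) <> 0)%nat).
  { repeat (apply Nat.neq_mul_0; split); auto using fact_neq_0, fact_pow_neq0. }
  destruct (INR_ratio_integral _ _ Hb (divide_RatR2_weight n r i j Hij Hjn Hn)) as [w Hw].
  exists w; rewrite <- Hw, !mult_INR, pow_INR.
  set (c := INR (fact (r * n + j + 1))
            / (INR (fact n) ^ r * INR (fact (j - i)) * INR (fact (r * n + i + 1)))).
  set (G1 := gcd_falling ((r + 1) * n + 1) (n - j) (dn n)).
  set (G2 := gcd_falling (r * n + j - i) (r * n + j - n) (dn n)).
  replace (INR (fact (r * n + j + 1)) * INR G1 * INR G2
           / (INR (fact n) ^ r * INR (fact (j - i)) * INR (fact (r * n + i + 1))))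
    with (c * (INR G1 * INR G2))
    by (unfold c; field; repeat split; try apply INR_fact_neq_0; apply pow_nonzero, INR_fact_neq_0).
  apply taylor_multiple_ext with
    (fun x => c * (falling (INR ((r + 1) * n + 1) + IZR (-1) * x) (n - j)
                   * falling (INR (r * n + j - i) + IZR (-1) * x) (r * n + j - n))).
  - apply taylor_multiple_scal, taylor_multiple_mult; apply taylor_multiple_falling; lia.
  - generalize (locally_Rabs_lt 1 Rlt_0_1); apply filter_imp; intros x Hx; apply Rabs_def2 in Hx.
    rewrite RatR2_falling_ratio by (exact Hij || lra).
    rewrite (falling_RatR2_split n r i j x Hij Hjn Hn).
    assert (P := falling_sub_pos (r * n + j + 1) (i + 1) x ltac:(lia) ltac:(lra)).
    assert (Hneg : forall k, INR k + IZR (-1) * x = INR k - x) by (intros; ring).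
    rewrite !Hneg; unfold c.
    field; repeat split; try apply INR_fact_neq_0; try apply pow_nonzero, INR_fact_neq_0; lra.
Qed.

Lemma taylor_multiple_RatR2_small i j n : (i <= j)%nat -> (j < n)%nat ->
  exists w : Z, taylor_multiple (INR (dn n)) (IZR w) (RatR2 i j n 0).
Proof.
  intros Hij Hjn.
  destruct (INR_ratio_integral _ _ (fact_neq_0 (i + 1))
              (divide_fact_gcd_falling n (i + 1) (n + 1) ltac:(lia) ltac:(lia))) as [w Hw].
  exists w; rewrite <- Hw.
  assert (F := falling_fact (j + 1) (i + 1) ltac:(lia)).
  replace (j + 1 - (i + 1))%nat with (j - i)%nat in F by lia.
  assert (F0 : 0 < falling (INR (j + 1)) (i + 1)).
  { apply falling_pos; rewrite !plus_INR; apply le_INR in Hij; simpl; lra. }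
  set (c := falling (INR (j + 1)) (i + 1) / INR (fact (i + 1))).
  replace (INR (gcd_falling (n + 1) (i + 1) (dn n)) / INR (fact (i + 1)))
    with (c * (INR (gcd_falling (n + 1) (i + 1) (dn n)) * / falling (INR (j + 1)) (i + 1)))
    by (unfold c; field; split; [apply INR_fact_neq_0 | lra]).
  apply taylor_multiple_ext with
    (fun x => c * (falling (INR (n + 1) + IZR (-1) * x) (i + 1)
                   * / falling (INR (j + 1) - x) (i + 1))).
  - apply taylor_multiple_scal, taylor_multiple_mult; [apply taylor_multiple_falling; lia |].
    apply taylor_multiple_inv_falling; [lia |]; intros k Hk Hkj; apply dn_divide; lia.
  - generalize (locally_Rabs_lt 1 Rlt_0_1); apply filter_imp; intros x Hx; apply Rabs_def2 in Hx.
    rewrite RatR2_falling_ratio by (exact Hij || lra).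
    rewrite Nat.mul_0_l, !Nat.add_0_l, Nat.mul_1_l, pow_O.
    assert (P := falling_sub_pos (j + 1) (i + 1) x ltac:(lia) ltac:(lra)).
    replace (INR (n + 1) + IZR (-1) * x) with (INR (n + 1) - x) by ring.
    unfold c; rewrite <- F.
    field; repeat split; try apply INR_fact_neq_0; lra.
Qed.

Theorem mainTheorem16 (i j n r H : nat) :
  ((i <= n)%nat -> (j <= n)%nat ->
     exists z : Z,
       INR (dn n) ^ H * / INR (fact H) * Derive_n (RatR1 i j n r) H 0 = IZR z) /\
  ((i <= j)%nat -> (j <= n)%nat ->
     exists z : Z,
       INR (dn n) ^ H * / INR (fact H) * Derive_n (RatR2 i j n r) H 0 = IZR z).
Proof.
  split.
  - intros _ Hj; destruct (taylor_multiple_RatR1 i j n r Hj) as [w Hw].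
    exact (taylor_multiple_Derive_n _ _ _ Hw H).
  - intros Hi Hj; destruct (le_lt_dec n (r * n + j)) as [Hn | Hn].
    + destruct (taylor_multiple_RatR2_large i j n r Hi Hj Hn) as [w Hw].
      exact (taylor_multiple_Derive_n _ _ _ Hw H).
    + assert (Hr : r = 0%nat) by nia; subst r.
      destruct (taylor_multiple_RatR2_small i j n Hi ltac:(lia)) as [w Hw].
      exact (taylor_multiple_Derive_n _ _ _ Hw H).
Qed.
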